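(* Let $\mu$ be a probability measure on $\mathrm{Homeo}_+(\mathbb{R})$ with finite or countable support having the shiftability property. Then for every $x\in\mathbb{R}$, almost surely both $\limsup_{n\to\infty}F_n(x)$ and $\liminf_{n\to\infty}F_n(x)$ belong to $\{-\infty,+\infty\}$.
   Context: Setup. Let $\mu$ be a probability measure on the group $\mathrm{Homeo}_+(\mathbb{R})$ of orientation-preserving homeomorphisms of $\mathbb{R}$, supported on a finite or countable set $\{f_1,f_2,\dots\}$ with $p_i=\mu(\{f_i\})>0$, $\sum_i p_i=1$. Let $g_1,g_2,\dots$ be i.i.d. random maps with law $\mu$, and set $F_0=\mathrm{id}$, $F_n=g_n\circ\cdots\circ g_1$. The system has the shiftability property if for every $x\in\mathbb{R}$ there exist $f,g$ with $\mu(\{f\})>0$, $\mu(\{g\})>0$ and $g(x)<x<f(x)$. *)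

From HB Require Import structures.
From mathcomp Require Import all_boot all_order all_algebra.
From mathcomp Require Import all_classical all_reals all_analysis.
Set Implicit Arguments. Unset Strict Implicit. Unset Printing Implicit Defensive.
Import Order.TTheory GRing.Theory Num.Theory.
Import numFieldNormedType.Exports.
Local Open Scope classical_set_scope.
Local Open Scope ring_scope.

Definition homeo_plus (R : realType) (f : R -> R) : Prop :=
  continuous f /\ (forall x y : R, x < y -> f x < f y) /\
  exists g : R -> R, continuous g /\ cancel f g /\ cancel g f.

(* F_n(x) = g_n o ... o g_1 (x), where g_{k+1} = f (X k w) *)
Fixpoint Fn (R : realType) (T : Type) (f : nat -> R -> R) (X : nat -> T -> nat)
    (n : nat) (w : T) (x : R) : R :=
  match n with
  | 0%N => x
  | m.+1 => f (X m w) (Fn f X m w x)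
  end.

(* The random indices X 0, X 1, ... are i.i.d. with law p on nat:
   the joint law of (X 0, ..., X (n-1)) is the product law. *)
Definition iid_law (d : measure_display) (T : measurableType d) (R : realType)
    (P : probability T R) (X : nat -> T -> nat) (p : nat -> R) : Prop :=
  (forall k i, measurable (X k @^-1` [set i])) /\
  forall (n : nat) (s : nat -> nat),
    P [set w | forall k, (k < n)%N -> X k w = s k] = (\prod_(k < n) p (s k))%:E.

(* Fix x and suppose limsup F_n(x) = L is finite. Shiftability and continuity
   give an index i with p_i > 0 and a rational q < L with L < f_i(q). Then
   F_n(x) < f_i(q) for n >= m (some m), while F_n(x) >= q for infinitely many
   n >= m ("visits"). Since f_i is increasing, the step f_i is never applied at
   a visit. By independence of the next index from the past, the probability
   that the first K visits all avoid f_i is at most (1 - p_i)^K, so the event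
   "infinitely many visits, all avoiding f_i" is null; a countable union over
   (i, q, m) covers {limsup finite}. The liminf case is the limsup case for the
   conjugate system y |-> -f_i(-y). *)

From HB Require Import structures.
From mathcomp Require Import all_boot all_order all_algebra.
From mathcomp Require Import all_classical all_reals all_analysis.
From mathcomp Require Import lra.
Set Implicit Arguments.
Unset Strict Implicit.
Unset Printing Implicit Defensive.
Import Order.TTheory GRing.Theory Num.Theory.
Import numFieldNormedType.Exports.
Local Open Scope classical_set_scope.
Local Open Scope ring_scope.

Section FiniteDependence.

Definition depends_on (n : nat) (Q : (nat -> nat) -> Prop) : Prop :=
  forall s t, (forall k, (k < n)%N -> s k = t k) -> (Q s <-> Q t).

Definition set_at (s : nat -> nat) (n j : nat) : nat -> nat :=
  fun k => if k == n then j else s k.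

Definition cylinder (n L : nat) (t s : nat -> nat) : Prop :=
  forall k, (k < L)%N -> s (n + k)%N = t k.

Definition prepend (j : nat) (t : nat -> nat) : nat -> nat :=
  fun k => if k is k'.+1 then t k' else j.

Lemma depends_on0 Q : depends_on 0 Q -> (forall s, Q s) \/ (forall s, ~ Q s).
Proof.
move=> hQ; have Qc s : Q s <-> Q (fun _ => 0%N) by apply: hQ.
have [q|nq] := pselect (Q (fun _ => 0%N)); [left|right] => s.
  exact: (Qc s).2.
by move/(Qc s).1.
Qed.

Lemma depends_on_mono n n' Q : (n <= n')%N -> depends_on n Q -> depends_on n' Q.
Proof. by move=> nn' hQ s t h; apply: hQ => k kn; apply: h; exact: leq_trans kn nn'. Qed.

Lemma depends_onI n Q1 Q2 :
  depends_on n Q1 -> depends_on n Q2 -> depends_on n (fun s => Q1 s /\ Q2 s).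
Proof.
by move=> h1 h2 s t h; have := h1 _ _ h; have := h2 _ _ h; tauto.
Qed.

Lemma depends_on_set_at n Q j :
  depends_on n.+1 Q -> depends_on n (fun s => Q (set_at s n j)).
Proof.
move=> hQ s t hst; apply: hQ => k; rewrite ltnS /set_at.
by case: eqP => // /eqP kn kn1; apply: hst; rewrite ltn_neqAle kn kn1.
Qed.

Lemma set_at_self n Q s : depends_on n.+1 Q -> (Q s <-> Q (set_at s n (s n))).
Proof. by move=> hQ; apply: hQ => k _; rewrite /set_at; case: eqP => // ->. Qed.

Lemma depends_on_cylinder n L t : depends_on (n + L) (cylinder n L t).
Proof.
by move=> s s' h; split => H k kL; rewrite -H // ?h // ltn_add2l.
Qed.

Lemma cylinder_prepend n L t Q s : depends_on n.+1 Q ->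
  (Q s /\ cylinder n.+1 L t s) <->
  exists j, Q (set_at s n j) /\ cylinder n L.+1 (prepend j t) s.
Proof.
move=> hQ; split.
  move=> [Qs cyl]; exists (s n); split; first exact: (set_at_self _ hQ).1.
  by case=> [_|k kL]; rewrite /= ?addn0 // addnS -addSn; exact: cyl.
move=> [j [Qj cyl]].
have sn : s n = j by have := cyl 0%N erefl; rewrite addn0.
split; first by rewrite -sn in Qj; exact: (set_at_self _ hQ).2.
by move=> k kL; have := cyl k.+1 kL; rewrite /= addnS -addSn.
Qed.

(* The prepended cylinder fixes coordinate n to j; this gives disjointness in j. *)
Lemma cylinder_prepend_head n L j t s : cylinder n L.+1 (prepend j t) s -> s n = j.
Proof. by move/(_ 0%N erefl); rewrite addn0. Qed.

End FiniteDependence.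

Section Visits.
Variables (R : realType) (f : nat -> R -> R) (x : R).

Fixpoint orbit (s : nat -> nat) (n : nat) : R :=
  if n is n'.+1 then f (s n') (orbit s n') else x.

Lemma Fn_orbit (T : Type) (X : nat -> T -> nat) n w :
  Fn f X n w x = orbit (fun k => X k w) n.
Proof. by elim: n => //= n ->. Qed.

Lemma orbit_depends n s t : (forall k, (k < n)%N -> s k = t k) ->
  forall k, (k <= n)%N -> orbit s k = orbit t k.
Proof. by move=> h; elim=> //= k IH kn; rewrite h // IH // ltnW. Qed.

Variables (u : R) (m : nat).

Definition visit (s : nat -> nat) (n : nat) : bool := (m <= n)%N && (u <= orbit s n).

Fixpoint nvisits (s : nat -> nat) (n : nat) : nat :=
  if n is n'.+1 then (nvisits s n' + visit s n')%N else 0%N.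

Definition avoids_at_visits (i : nat) (s : nat -> nat) (n : nat) : Prop :=
  forall k, (k < n)%N -> visit s k -> s k <> i.

Definition avoiding_visit (i K n : nat) (s : nat -> nat) : Prop :=
  [/\ avoids_at_visits i s n, nvisits s n = K & visit s n].

Lemma visit_depends n s t : (forall k, (k < n)%N -> s k = t k) ->
  forall k, (k <= n)%N -> visit s k = visit t k.
Proof. by move=> h k kn; rewrite /visit (orbit_depends h kn). Qed.

Lemma nvisits_depends n s t : (forall k, (k < n)%N -> s k = t k) ->
  forall k, (k <= n)%N -> nvisits s k = nvisits t k.
Proof.
move=> h; elim=> //= k IH kn.
by rewrite IH ?(ltnW kn) // (visit_depends h (ltnW kn)).
Qed.

Lemma avoiding_visit_depends i K n : depends_on n (avoiding_visit i K n).
Proof.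
move=> s t h; have hv := visit_depends h; have hc := nvisits_depends h.
rewrite /avoiding_visit /avoids_at_visits (hv n (leqnn n)) (hc n (leqnn n)).
split=> -[avoid c v]; split => // k kn.
  by rewrite -hv ?(ltnW kn) // -h //; exact: avoid.
by rewrite hv ?(ltnW kn) // h //; exact: avoid.
Qed.

Lemma nvisits_mono s a b : (a <= b)%N -> (nvisits s a <= nvisits s b)%N.
Proof.
move=> ab; rewrite -(subnK ab); elim: (b - a)%N => //= k IH.
exact: leq_trans IH (leq_addr _ _).
Qed.

Lemma nvisits_last s n : (0 < nvisits s n)%N ->
  exists2 k, (k < n)%N & visit s k /\ nvisits s n = (nvisits s k).+1.
Proof.
elim: n => //= n IH; case hv: (visit s n) => /=.
  by move=> _; exists n => //; rewrite addn1.
by rewrite addn0 => /IH [k kn hk]; exists k => //; exact: ltnW.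
Qed.

Lemma visit_number_inj s a b :
  visit s a -> visit s b -> nvisits s a = nvisits s b -> a = b.
Proof.
have step a' b' : (a' < b')%N -> visit s a' -> nvisits s a' <> nvisits s b'.
  move=> ab va; have := nvisits_mono s ab; rewrite /= va addn1 => lt eq.
  by move: lt; rewrite eq ltnn.
move=> va vb eab; case: (ltngtP a b) => // ab; first by case: (step _ _ ab va).
by case: (step _ _ ab vb).
Qed.

Lemma nvisits_hit s : (forall N, exists2 n, (N <= n)%N & visit s n) ->
  forall K, exists n, visit s n /\ nvisits s n = K.
Proof.
move=> hinf K.
have unbounded : forall K', exists n, (K' <= nvisits s n)%N.
  elim=> [|K' [n hn]]; first by exists 0%N.
  have [n' nn' hv] := hinf n; exists n'.+1 => /=; rewrite hv addn1 ltnS.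
  exact: leq_trans hn (nvisits_mono s nn').
case: (ex_minnP (unbounded K.+1)) => -[//|n] /= hn hmin.
have notK : ~~ (K < nvisits s n)%N by apply/negP => /hmin; rewrite ltnn.
move: hn notK; case hv: (visit s n) => /=; rewrite -leqNgt.
  by rewrite addn1 ltnS => a b; exists n; split => //; apply/eqP; rewrite eqn_leq a b.
by rewrite addn0 => a b; move: (leq_trans a b); rewrite ltnn.
Qed.

Lemma avoiding_visit_prev i K n s : avoiding_visit i K.+1 n s ->
  exists2 k, avoiding_visit i K k s & s k <> i.
Proof.
move=> [avoid c _]; have := @nvisits_last s n; rewrite c => /(_ erefl).
move=> [k kn [vk ck]]; exists k; last exact: avoid.
split; [|by case: ck|by []].
by move=> k' k'k; apply: avoid; exact: ltn_trans k'k kn.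
Qed.

Lemma avoiding_visits_forever i s :
  {homo f i : a b / a <= b} ->
  (forall k, (m <= k)%N -> orbit s k < f i u) ->
  (forall N, exists2 n, (N <= n)%N & visit s n) ->
  forall K, exists n, avoiding_visit i K n s.
Proof.
move=> fi_mono below hinf K; have [n [vn cn]] := nvisits_hit hinf K.
exists n; split => // k _ /andP[mk uk] ski.
have := below k.+1 (leqW mk); rewrite /= ski.
by have := fi_mono _ _ uk; lra.
Qed.

End Visits.

Lemma le_expr_le0 (R : realType) (z q : R) :
  0 <= q < 1 -> (forall K, z <= q ^+ K) -> z <= 0.
Proof.
move=> /andP[q0 q1] hz; rewrite leNgt; apply/negP => z0.
have qn : `|q| < 1 by rewrite ger0_norm.
have [N _ hN] := @cvgr_lt R nat \oo _ (GRing.exp q) 0 (cvg_expr qn) z z0.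
by have := hN N (leqnn N); have := hz N; rewrite /=; lra.
Qed.

Lemma limn_esup_finite (R : realType) (v : nat -> R) (L : R) :
  limn_esup (fun n => (v n)%:E) = L%:E ->
  (forall t, L < t -> exists N, forall n, (N <= n)%N -> v n < t) /\
  (forall t, t < L -> forall N, exists2 n, (N <= n)%N & t < v n).
Proof.
have := @cvg_esups_inf R (fun n => (v n)%:E).
rewrite limn_esup_lim => /cvg_lim -> // hL; split.
  move=> t Lt; have : (ereal_inf (range (esups (fun n => (v n)%:E))) < t%:E)%E.
    by rewrite hL lte_fin.
  move=> /ereal_inf_lt [_ [N _ <-]] hN; exists N => n Nn.
  by rewrite -lte_fin; apply: le_lt_trans hN; apply: ereal_sup_ubound; exists n.
move=> t tL N.
have : (t%:E < esups (fun n => (v n)%:E) N)%E.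
  apply: lt_le_trans (_ : L%:E <= _)%E; first by rewrite lte_fin.
  by rewrite -hL; apply: ereal_inf_lbound; exists N.
by move=> /ereal_sup_gt [_ [n Nn <-]]; rewrite lte_fin => h; exists n.
Qed.

Lemma ereal_infty_of_not_fin (R : realType) (e : \bar R) :
  ~ (exists r : R, e = r%:E) -> e = -oo%E \/ e = +oo%E.
Proof. by case: e => [r /(_ (ex_intro _ r erefl))| |]; auto. Qed.

Lemma rat_below (R : realType) (g : R -> R) (a c : R) :
  continuous g -> c < g a -> exists q : rat, ratr q < a /\ c < g (ratr q).
Proof.
move=> gC cga; have near_a := @cvgr_gt _ _ _ _ g (g a) (gC a) c cga.
have [e /= e0 He] := iffLR (nbhs_ballP _ _) (near_a _).
have [q] := @rat_in_itvoo R (a - e) a ltac:(by rewrite ltrBlDr ltrDl).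
rewrite in_itv /= => /andP[aeq qa]; exists q; split => //; apply: He; rewrite /ball /=.
by rewrite ger0_norm ?subr_ge0 ?ltW // ltrBlDr addrC -ltrBlDr.
Qed.

Lemma rat_above (R : realType) (g : R -> R) (a c : R) :
  continuous g -> g a < c -> exists q : rat, a < ratr q /\ g (ratr q) < c.
Proof.
move=> gC gac; have near_a := @cvgr_lt _ _ _ _ g (g a) (gC a) c gac.
have [e /= e0 He] := iffLR (nbhs_ballP _ _) (near_a _).
have [q] := @rat_in_itvoo R a (a + e) ltac:(by rewrite ltrDl).
rewrite in_itv /= => /andP[aq qae]; exists q; split => //; apply: He; rewrite /ball /=.
by rewrite distrC ger0_norm ?subr_ge0 ?ltW // ltrBlDl.
Qed.

(* Every level L is jumped over from a rational point below it by some
   step of positive probability; this is what shiftability gives upwards. *)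
Definition rational_upshift (R : realType) (f : nat -> R -> R) (p : nat -> R) : Prop :=
  forall L : R, exists i (q : rat), [/\ 0 < p i, ratr q < L & L < f i (ratr q)].

(* The system conjugated by y |-> -y, which exchanges limsup and liminf. *)
Definition conj_system (R : realType) (f : nat -> R -> R) : nat -> R -> R :=
  fun i y => - f i (- y).

Lemma Fn_conj (R : realType) (T : Type) (f : nat -> R -> R) (X : nat -> T -> nat) n w x :
  Fn (conj_system f) X n w (- x) = - Fn f X n w x.
Proof. by elim: n => //= n ->; rewrite /conj_system opprK. Qed.

Lemma conj_system_homo (R : realType) (f : nat -> R -> R) :
  (forall i, {homo f i : a b / a <= b}) -> forall i, {homo conj_system f i : a b / a <= b}.
Proof. by move=> f_homo i a b ab; rewrite /conj_system lerN2 f_homo // lerN2. Qed.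

Section Shiftability.
Variables (R : realType) (f : nat -> R -> R) (p : nat -> R).
Hypotheses (f_cont : forall i, continuous (f i))
  (shift : forall x : R, exists i j : nat, [/\ 0 < p i, 0 < p j & f j x < x < f i x]).

Lemma shift_rational_upshift : rational_upshift f p.
Proof.
move=> L; have [i [j [pi _ /andP[_ Lfi]]]] := shift L.
have [q [qL Lfq]] := rat_below (@f_cont i) Lfi.
by exists i, q.
Qed.

Lemma shift_rational_upshift_conj : rational_upshift (conj_system f) p.
Proof.
move=> L; have [i [j [_ pj /andP[fjL _]]]] := shift (- L).
have [q [Lq fqL]] := rat_above (@f_cont j) fjL.
exists j, (- q); split => //; rewrite rmorphN; first by rewrite ltrNl.
by rewrite /conj_system opprK ltrNr.
Qed.

End Shiftability.

Section IndependentIndices.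
Variables (d : measure_display) (T : measurableType d) (R : realType).
Variables (P : probability T R) (X : nat -> T -> nat) (p : nat -> R).
Hypotheses (hX : iid_law P X p) (p_ge0 : forall i, 0 <= p i).

Definition event (Q : (nat -> nat) -> Prop) : set T := [set w | Q (fun k => X k w)].

Lemma measurable_event n Q : depends_on n Q -> measurable (event Q).
Proof.
elim: n Q => [|n IH] Q hQ.
  case: (depends_on0 hQ) => [allQ|noQ].
    by rewrite (_ : event Q = setT) //; apply/seteqP; split => // w _; exact: allQ.
  by rewrite (_ : event Q = set0) //; apply/seteqP; split => // w /noQ.
suff -> : event Q = \bigcup_j (X n @^-1` [set j] `&` event (fun s => Q (set_at s n j))).
  apply: bigcupT_measurable => j; apply: measurableI; first exact: hX.1.
  exact: IH (depends_on_set_at j hQ).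
apply/seteqP; split => w /=.
  by move=> h; exists (X n w) => //; split => //=; exact: (set_at_self _ hQ).1.
by move=> [j _ [/= <- h]]; exact: (set_at_self _ hQ).2.
Qed.

(* For a trivial event this is the defining property of the i.i.d. law. *)
Lemma prob_event0_cylinder Q L t : depends_on 0 Q ->
  P (event (fun s => Q s /\ cylinder 0 L t s)) =
  (P (event Q) * (\prod_(k < L) p (t k))%:E)%E.
Proof.
case/depends_on0 => [allQ|noQ].
  rewrite (_ : event Q = setT); last by apply/seteqP; split => // w _; exact: allQ.
  rewrite probability_setT mul1e -hX.2; congr (P _).
  rewrite /event /cylinder; apply/seteqP; split => w /=.
    by move=> [_ h] k /h; rewrite add0n.
  by move=> h; split => // k /h; rewrite add0n.
rewrite (_ : event Q = set0); last by apply/seteqP; split => // w /noQ.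
rewrite measure0 mul0e (_ : event _ = set0) ?measure0 //.
by apply/seteqP; split => // w [/noQ].
Qed.

Lemma prob_event_cylinder n Q : depends_on n Q -> forall L t,
  P (event (fun s => Q s /\ cylinder n L t s)) =
  (P (event Q) * (\prod_(k < L) p (t k))%:E)%E.
Proof.
elim: n Q => [|n IH] Q hQ L t; first exact: prob_event0_cylinder.
pose Qj j s := Q (set_at s n j).
have hQj j : depends_on n (Qj j) := depends_on_set_at j hQ.
have split_last L' t' : P (event (fun s => Q s /\ cylinder n.+1 L' t' s)) =
    (\sum_(j <oo) (P (event (Qj j)) * ((p j)%:E * (\prod_(k < L') p (t' k))%:E)))%E.
  have mF j : measurable (event (fun s => Qj j s /\ cylinder n L'.+1 (prepend j t') s)).
    apply: (measurable_event (n := n + L'.+1)); apply: depends_onI.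
      exact: depends_on_mono (leq_addr _ _) (hQj j).
    exact: depends_on_cylinder.
  rewrite (_ : event _ = \bigcup_j event (fun s => Qj j s /\ cylinder n L'.+1 (prepend j t') s)).
    rewrite measure_semi_bigcup //; last exact: bigcupT_measurable.
      apply: eq_eseriesr => j _; apply: etrans (IH (Qj j) (hQj j) L'.+1 (prepend j t')) _.
      by rewrite big_ord_recl EFinM.
    move=> i j _ _ [w [[_ /cylinder_prepend_head wi] [_ /cylinder_prepend_head wj]]].
    by rewrite -wi -wj.
  apply/seteqP; split => w /=.
    by move=> /(cylinder_prepend _ _ _ hQ) [j hj]; exists j.
  by move=> [j _ hj]; apply/(cylinder_prepend _ _ _ hQ); exists j.
have -> : P (event Q) = (\sum_(j <oo) (P (event (Qj j)) * (p j)%:E))%E.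
  transitivity (\sum_(j <oo) (P (event (Qj j)) *
                 ((p j)%:E * (\prod_(k < 0) p (t k))%:E)))%E; last first.
    by apply: eq_eseriesr => j _; rewrite big_ord0 mule1.
  by rewrite -split_last; congr (P _); apply/seteqP; split => w //= [].
rewrite split_last [RHS]muleC -nneseriesZl; last first.
  by move=> j _; apply: mule_ge0 => //; rewrite lee_fin.
by apply: eq_eseriesr => j _; rewrite muleA muleC.
Qed.

Lemma prob_event_next n Q j : depends_on n Q ->
  P (event (fun s => Q s /\ s n = j)) = (P (event Q) * (p j)%:E)%E.
Proof.
move=> hQ; have := prob_event_cylinder hQ 1 (fun _ => j).
rewrite big_ord1 => <-; congr (P _); apply/seteqP; split => w /= [Qw hw]; split => //.
  by case=> // _; rewrite addn0.
by have := hw 0%N erefl; rewrite addn0.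
Qed.

(* The law p is a subprobability, since p_i = P(X_0 = i). *)
Lemma p_le1 i : p i <= 1.
Proof.
rewrite -lee_fin; have := hX.2 1%N (fun _ => i); rewrite big_ord1 => <-.
apply: probability_le1.
apply: (@measurable_event 1 (fun s => forall k, (k < 1)%N -> s k = i)) => s t h.
by split => H k k1; [rewrite -h ?H | rewrite h ?H].
Qed.

Lemma prob_event_next_neq n Q j : depends_on n Q ->
  P (event (fun s => Q s /\ s n <> j)) = (P (event Q) * (1 - p j)%:E)%E.
Proof.
move=> hQ.
have next_dep (R' : nat -> Prop) : depends_on n.+1 (fun s => Q s /\ R' (s n)).
  apply: depends_onI; first exact: depends_on_mono (leqnSn _) hQ.
  by move=> s t h; rewrite h.
have mEq := measurable_event (next_dep (eq^~ j)).
have mNeq := measurable_event (next_dep (fun k => k <> j)).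
have mQ := measurable_event hQ.
have splitQ : P (event Q) = (P (event (fun s => Q s /\ s n = j)) +
                             P (event (fun s => Q s /\ s n <> j)))%E.
  rewrite -measureU //; last by rewrite /event; apply/seteqP; split => // w /= [[_ ->] []].
  congr (P _); apply/seteqP; split => w /=; last by case=> -[].
  by move=> Qw; have [e|ne] := eqVneq (X n w) j; [left|right; split => //; apply/eqP].
move: splitQ; rewrite (prob_event_next j hQ).
rewrite -(fineK (fin_num_measure P _ mQ)) -(fineK (fin_num_measure P _ mNeq)).
by rewrite -!EFinM -EFinD => -[h]; congr (_%:E); rewrite mulrBr mulr1; lra.
Qed.

(* Each further avoiding visit costs an independent factor 1 - p_i. *)
Lemma prob_avoiding_visit_le (f : nat -> R -> R) x u m i K :
  (P (\bigcup_n event (avoiding_visit f x u m i K n)) <= ((1 - p i) ^+ K)%:E)%E.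
Proof.
have mA K' n : measurable (event (avoiding_visit f x u m i K' n)).
  exact: measurable_event (avoiding_visit_depends f x u m i K' (n := n)).
elim: K => [|K IH].
  by rewrite expr0; apply: probability_le1; exact: bigcupT_measurable.
pose B n := event (fun s => avoiding_visit f x u m i K n s /\ s n <> i).
have mB n : measurable (B n).
  apply: (@measurable_event n.+1); apply: depends_onI.
    exact: depends_on_mono (leqnSn n) (avoiding_visit_depends f x u m i K (n := n)).
  by move=> s t h; rewrite h.
have sub : \bigcup_n event (avoiding_visit f x u m i K.+1 n) `<=` \bigcup_n B n.
  by move=> w [n _ /avoiding_visit_prev [k hk ski]]; exists k.
apply: le_trans (measure_sigma_subadditive _ mB _ sub) _.
  exact: bigcupT_measurable.
rewrite (eq_eseriesr (g := fun n =>
    ((1 - p i)%:E * P (event (avoiding_visit f x u m i K n)))%E)); last first.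
  move=> n _; rewrite muleC.
  exact: etrans (prob_event_next_neq i (avoiding_visit_depends f x u m i K (n := n))) _.
rewrite nneseriesZl // -measure_semi_bigcup //; last 2 first.
- move=> a b _ _ [w [[_ ca va] [_ cb vb]]].
  by apply: (visit_number_inj va vb); rewrite ca cb.
- exact: bigcupT_measurable.
rewrite exprS EFinM; apply: lee_wpmul2l => //.
by rewrite lee_fin subr_ge0; exact: p_le1.
Qed.

Definition avoiding_forever (f : nat -> R -> R) x u m i : set T :=
  \bigcap_K \bigcup_n event (avoiding_visit f x u m i K n).

(* Since p_i > 0, the geometric bound forces this event to be null. *)
Lemma avoiding_forever_null (f : nat -> R -> R) x u m i : 0 < p i ->
  measurable (avoiding_forever f x u m i) /\ P (avoiding_forever f x u m i) = 0%E.
Proof.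
move=> pi_gt0.
have mU K : measurable (\bigcup_n event (avoiding_visit f x u m i K n)).
  apply: bigcupT_measurable => n.
  exact: measurable_event (avoiding_visit_depends f x u m i K (n := n)).
have mZ : measurable (avoiding_forever f x u m i) by exact: bigcapT_measurable.
split => //; apply/eqP; rewrite eq_le measure_ge0 andbT.
rewrite -(fineK (fin_num_measure P _ mZ)) lee_fin.
apply: (@le_expr_le0 _ _ (1 - p i)).
  by rewrite subr_ge0 p_le1 /= ltrBlDr ltrDl.
move=> K; rewrite -lee_fin fineK ?(fin_num_measure P _ mZ) //.
apply: le_trans (prob_avoiding_visit_le f x u m i K).
by apply: le_measure; rewrite ?inE // => w; apply.
Qed.

(* The heart of the argument: a finite limsup forces infinitely many visits
   above a rational level that all avoid a fixed positive-probability step. *)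
Lemma limsup_finite_negligible (f : nat -> R -> R) :
  (forall i, {homo f i : a b / a <= b}) -> rational_upshift f p -> forall x : R,
  P.-negligible [set w | exists L : R, limn_esup (fun n => (Fn f X n w x)%:E) = L%:E].
Proof.
move=> f_homo upshift x.
pose ratn n : rat := odflt 0 (unpickle n).
pose Z i qn m := if 0 < p i then avoiding_forever f x (ratr (ratn qn)) m i else set0.
apply: (negligibleS (A := \bigcup_i \bigcup_qn \bigcup_m Z i qn m)); last first.
  apply: negligible_bigcup => i; apply: negligible_bigcup => qn.
  apply: negligible_bigcup => m; rewrite /Z; case: ifP => [pi|_].
    have [mZ PZ] := avoiding_forever_null f x (ratr (ratn qn)) m pi.
    by exists (avoiding_forever f x (ratr (ratn qn)) m i); split.
  exact: negligible_set0.
move=> w [L hL]; have [i [q [pi qL Lf]]] := upshift L.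
have [below above] := limn_esup_finite hL.
have [N0 hN0] := below _ Lf.
exists i => //; exists (pickle q) => //; exists N0 => //.
rewrite /Z pi /ratn pickleK /= => K _.
have [n hn] : exists n, avoiding_visit f x (ratr q) N0 i K n (fun k => X k w).
  apply: (avoiding_visits_forever (f_homo i)) => [k k_ge|N].
    by rewrite -Fn_orbit; exact: hN0.
  have [n Nn hn] := above _ qL (maxn N N0).
  exists n; first exact: leq_trans (leq_maxl _ _) Nn.
  by rewrite /visit (leq_trans (leq_maxr _ _) Nn) -Fn_orbit ltW.
by exists n.
Qed.

End IndependentIndices.

Theorem lemma1 (R : realType) (f : nat -> R -> R) (p : nat -> R)
  (hhomeo : forall i, homeo_plus (f i))
  (hp0 : forall i, 0 <= p i)
  (hp1 : (\sum_(i <oo) (p i)%:E)%E = 1%E)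
  (hshift : forall x : R, exists i j : nat,
      [/\ 0 < p i, 0 < p j & f j x < x < f i x])
  (d : measure_display) (T : measurableType d) (P : probability T R)
  (X : nat -> T -> nat) (hX : iid_law P X p) :
  forall x : R, {ae P, forall w : T,
    (limn_esup (fun n => (Fn f X n w x)%:E) = -oo%E \/
     limn_esup (fun n => (Fn f X n w x)%:E) = +oo%E) /\
    (limn_einf (fun n => (Fn f X n w x)%:E) = -oo%E \/
     limn_einf (fun n => (Fn f X n w x)%:E) = +oo%E)}.
Proof.
move=> x.
have f_cont i : continuous (f i) := (hhomeo i).1.
have f_homo i : {homo f i : a b / a <= b}.
  by apply: ltW_homo; have [_ []] := hhomeo i.
have limsup_null := limsup_finite_negligible hX hp0 f_homo
  (shift_rational_upshift f_cont hshift) x.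
have liminf_null := limsup_finite_negligible hX hp0 (conj_system_homo f_homo)
  (shift_rational_upshift_conj f_cont hshift) (- x).
apply: negligibleS (negligibleU limsup_null liminf_null) => w /= notQ.
apply: contrapT => hw; apply: notQ.
split; apply: ereal_infty_of_not_fin => -[r hr]; apply: hw; first by left; exists r.
right; exists (- r).
have -> : (fun n => (Fn (conj_system f) X n w (- x))%:E) =
          -%E \o (fun n => (Fn f X n w x)%:E).
  by apply/funext => n; rewrite /= Fn_conj EFinN.
by rewrite limn_esupN hr.
Qed.
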